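(* With $N_U(B)$ as defined below, let $\mathcal{N}(B)$ be the number of $(\eta_1,\dots,\eta_8,\alpha_1,\alpha_2,\alpha_3)\in\mathbb{Z}^{11}$ satisfying $$\eta_1^2\eta_2\alpha_1^3+\eta_7\alpha_2^2+\eta_4\eta_5^2\eta_6^3\eta_8^4\alpha_3=0,$$ $\eta_1,\dots,\eta_8,\alpha_2\ge1$, the height conditions $$\eta_1^2\eta_2^4\eta_3^6\eta_4^5\eta_5^4\eta_6^3\eta_7^3\eta_8^2\le B,\quad |\eta_1^2\eta_2^3\eta_3^4\eta_4^3\eta_5^2\eta_6\eta_7^2\alpha_1|\le B,\quad |\alpha_3|\le B,\quad \eta_1^3\eta_2^6\eta_3^9\eta_4^7\eta_5^5\eta_6^3\eta_7^5\eta_8\alpha_2\le B^2,$$ and the coprimality conditions $\gcd(\alpha_1,\eta_2\cdots\eta_8)=\gcd(\alpha_2,\eta_1\cdots\eta_6\eta_8)=\gcd(\alpha_3,\eta_1\cdots\eta_7)=1$, $\gcd(\eta_8,\eta_1\cdots\eta_5\eta_7)=\gcd(\eta_7,\eta_1\eta_2\eta_4\eta_5\eta_6)=\gcd(\eta_6,\eta_1\cdots\eta_4)=1$, $\gcd(\eta_5,\eta_1\eta_2\eta_3)=\gcd(\eta_4,\eta_1\eta_2)=\gcd(\eta_3,\eta_1)=1$. Then $N_U(B)=2\mathcal{N}(B)+O(B^{2/3})$.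
   Context: $N_U(B)=\frac12\#\{\mathbf{x}=(x_0,x_1,x_2,x_3)\in\mathbb{Z}^4:\ x_0^2=x_1x_2^3+x_1^3x_3,\ x_1\ne0,\ \gcd(x_1,x_2,x_3)=1,\ |x_i|\le B\ (1\le i\le3),\ |x_0|\le B^2\}$. *)

From Stdlib Require Import ZArith Reals List.
Import ListNotations.
Open Scope R_scope.

Definition is_card {T : Type} (P : T -> Prop) (n : nat) : Prop :=
  exists l : list T, NoDup l /\ (forall x, In x l <-> P x) /\ length l = n.

(* The set counted (with factor 1/2) by N_U(B): points (x0,x1,x2,x3) in Z^4. *)
Definition SU (B : R) (x : Z * Z * Z * Z) : Prop :=
  let '(x0, x1, x2, x3) := x in
  (x0 * x0 = x1 * x2 ^ 3 + x1 ^ 3 * x3)%Z /\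
  x1 <> 0%Z /\
  Z.gcd (Z.gcd x1 x2) x3 = 1%Z /\
  IZR (Z.abs x1) <= B /\ IZR (Z.abs x2) <= B /\ IZR (Z.abs x3) <= B /\
  IZR (Z.abs x0) <= B ^ 2.

Definition SN (B : R) (t : list Z) : Prop :=
  match t with
  | [e1; e2; e3; e4; e5; e6; e7; e8; a1; a2; a3] =>
      (e1 ^ 2 * e2 * a1 ^ 3 + e7 * a2 ^ 2
         + e4 * e5 ^ 2 * e6 ^ 3 * e8 ^ 4 * a3 = 0)%Z /\
      (1 <= e1)%Z /\ (1 <= e2)%Z /\ (1 <= e3)%Z /\ (1 <= e4)%Z /\
      (1 <= e5)%Z /\ (1 <= e6)%Z /\ (1 <= e7)%Z /\ (1 <= e8)%Z /\
      (1 <= a2)%Z /\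
      IZR (e1^2 * e2^4 * e3^6 * e4^5 * e5^4 * e6^3 * e7^3 * e8^2) <= B /\
      IZR (Z.abs (e1^2 * e2^3 * e3^4 * e4^3 * e5^2 * e6 * e7^2 * a1)) <= B /\
      IZR (Z.abs a3) <= B /\
      IZR (e1^3 * e2^6 * e3^9 * e4^7 * e5^5 * e6^3 * e7^5 * e8 * a2) <= B ^ 2 /\
      Z.gcd a1 (e2 * e3 * e4 * e5 * e6 * e7 * e8) = 1%Z /\
      Z.gcd a2 (e1 * e2 * e3 * e4 * e5 * e6 * e8) = 1%Z /\
      Z.gcd a3 (e1 * e2 * e3 * e4 * e5 * e6 * e7) = 1%Z /\
      Z.gcd e8 (e1 * e2 * e3 * e4 * e5 * e7) = 1%Z /\
      Z.gcd e7 (e1 * e2 * e4 * e5 * e6) = 1%Z /\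
      Z.gcd e6 (e1 * e2 * e3 * e4) = 1%Z /\
      Z.gcd e5 (e1 * e2 * e3) = 1%Z /\
      Z.gcd e4 (e1 * e2) = 1%Z /\
      Z.gcd e3 e1 = 1%Z
  | _ => False
  end.

(* Points with x0 = 0 force x1 and x3 to be coprime cubes, so there are
   O(B^(2/3)) of them.  The others fall into four classes according to the
   signs of x0 and x1, and changing signs maps each class onto the class
   x0, x1 > 0.  That class is in bijection with the points counted by N(B)
   through
     x1 = eta1^2 eta2^4 eta3^6 eta4^5 eta5^4 eta6^3 eta7^3 eta8^2,
     x2 = - eta1^2 eta2^3 eta3^4 eta4^3 eta5^2 eta6 eta7^2 alpha1,
     x0 = eta1^3 eta2^6 eta3^9 eta4^7 eta5^5 eta6^3 eta7^5 eta8 alpha2,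
     x3 = - alpha3.
   The bijection is checked one prime at a time: the coprimality conditions
   say that a prime divides at most two "adjacent" eta's, and then the
   valuations of x1, gcd(x1, x2) and x0 determine those of the eta's. *)

From Stdlib Require Import ZArith Reals List Lia Lra Psatz Classical.
From mathcomp Require all_boot.
Import ListNotations.

(** * Finite cardinalities *)

Section Cardinality.
Local Open Scope nat_scope.

Lemma card_exists {T} (P : T -> Prop) (L : list T) :
  (forall x, P x -> In x L) -> exists n, is_card P n.
Proof.
  intros H.
  assert (G : exists l, NoDup l /\ forall x, In x l <-> P x /\ In x L).
  { clear H. induction L as [|a L [l [Hn Hl]]].
    - exists []. split; [constructor|]. simpl. tauto.
    - destruct (classic (P a /\ ~ In a l)) as [Ha|Ha].
      + exists (a :: l). split; [constructor; tauto|].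
        intros x. simpl. rewrite Hl. split; [intros [<-|Hx]|intros [Px [<-|Hx]]]; tauto.
      + exists l. split; auto. intros x. rewrite Hl. simpl.
        split; [tauto|]. intros [Px [<-|Hx]]; [|tauto].
        destruct (classic (In a l)) as [I|I]; [apply Hl in I|]; tauto. }
  destruct G as [l [Hn Hl]]. exists (length l), l. repeat split; auto.
  - intros Hx. apply Hl in Hx. tauto.
  - intros Hx. apply Hl. auto.
Qed.

Lemma card_ext {T} (P Q : T -> Prop) n :
  (forall x, P x <-> Q x) -> is_card P n -> is_card Q n.
Proof.
  intros H [l [N [I L]]]. exists l. repeat split; auto; intros; [apply H, I|apply I, H]; auto.
Qed.

Lemma card_union {T} (P Q : T -> Prop) a b : is_card P a -> is_card Q b ->
  (forall x, P x -> Q x -> False) -> is_card (fun x => P x \/ Q x) (a + b).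
Proof.
  intros [l1 [N1 [I1 L1]]] [l2 [N2 [I2 L2]]] D. exists (l1 ++ l2). repeat split.
  - apply NoDup_app; auto. intros x H1 H2. apply (D x); [apply I1|apply I2]; auto.
  - intros H. apply in_app_or in H. destruct H; [left; apply I1|right; apply I2]; auto.
  - intros [H|H]; apply in_or_app; [left; apply I1|right; apply I2]; auto.
  - rewrite length_app. lia.
Qed.

Lemma card_image {T U} (P : T -> Prop) (Q : U -> Prop) (f : T -> U) n :
  is_card P n -> (forall x y, P x -> P y -> f x = f y -> x = y) ->
  (forall u, Q u <-> exists x, P x /\ f x = u) -> is_card Q n.
Proof.
  intros [l [N [I L]]] Inj HQ. exists (map f l). repeat split.
  - apply NoDup_map_NoDup_ForallPairs; auto. intros x y Hx Hy. apply Inj; apply I; auto.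
  - intros H. apply in_map_iff in H as [y [<- Hy]]. apply HQ. exists y. split; auto. apply I, Hy.
  - intros H. apply HQ in H as [y [Py <-]]. apply in_map, I, Py.
  - rewrite length_map. auto.
Qed.

Lemma card_le_inj {T U} (P : T -> Prop) (f : T -> U) (L : list U) n :
  is_card P n -> (forall x y, P x -> P y -> f x = f y -> x = y) ->
  (forall x, P x -> In (f x) L) -> n <= length L.
Proof.
  intros [l [N [I <-]]] Inj HL. rewrite <- (length_map f l).
  apply NoDup_incl_length.
  - apply NoDup_map_NoDup_ForallPairs; auto. intros x y Hx Hy. apply Inj; apply I; auto.
  - intros u Hu. apply in_map_iff in Hu as [x [<- Hx]]. apply HL, I, Hx.
Qed.

Lemma card_exists_inj {T U} (P : T -> Prop) (f : T -> U) (L : list U) :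
  (forall x y, P x -> P y -> f x = f y -> x = y) -> (forall x, P x -> In (f x) L) ->
  exists n, is_card P n.
Proof.
  revert P. induction L as [|u L IH]; intros P Inj HL.
  - exists 0, []. split; [constructor|split; [|reflexivity]].
    intros x; split; [intros []|intros Hx; exact (HL _ Hx)].
  - destruct (IH (fun x => P x /\ f x <> u)) as [n Hn].
    + intros x y [Px _] [Py _]. apply Inj; auto.
    + intros x [Px Hx]. destruct (HL x Px) as [E|I]; [congruence|auto].
    + destruct (classic (exists x0, P x0 /\ f x0 = u)) as [[x0 [P0 E0]]|NE].
      * exists (n + 1). apply (card_ext (fun x => (P x /\ f x <> u) \/ x = x0)).
        { intros x. split; [intros [[Px _]| ->]; auto|].
          intros Px. destruct (classic (f x = u)) as [E|E]; [right|left; auto].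
          apply Inj; auto; congruence. }
        apply card_union; auto.
        -- exists [x0]. repeat split; [repeat constructor; simpl; tauto| |]; simpl.
           ++ intros [E|[]]; auto.
           ++ intros ->; auto.
        -- intros x [_ Hx] ->. auto.
      * exists n. apply (card_ext (fun x => P x /\ f x <> u)); auto.
        intros x. split; [tauto|]. intros Px. split; auto. intros E. apply NE. exists x; auto.
Qed.

End Cardinality.

(** * Valuations *)

Module Valuation.
Import all_boot.
Local Open Scope nat_scope.

Definition is_prime (p : nat) : Prop := prime p.

(* Junk value: [vp p 0 = 0]. *)
Definition vp (p : nat) (x : Z) : nat := logn p (Z.abs_nat x).

Lemma is_prime_gt1 p : is_prime p -> (1 < Z.of_nat p)%Z.
Proof. by move=> /prime_gt1 /ltP; lia. Qed.

Lemma Zdivide_dvdn (d : nat) (x : Z) : (Z.of_nat d | x)%Z <-> d %| Z.abs_nat x.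
Proof.
split=> [[z ->]|/dvdnP [k Hk]].
  by apply/dvdnP; exists (Z.abs_nat z); rewrite Zabs2Nat.inj_mul Zabs2Nat.id.
have Ha : Z.abs x = (Z.of_nat k * Z.of_nat d)%Z.
  by rewrite -Nat2Z.inj_abs_nat Hk -Nat2Z.inj_mul.
case: (Z.abs_spec x) => [[_ Hx]|[_ Hx]].
  by exists (Z.of_nat k); lia.
by exists (- Z.of_nat k)%Z; lia.
Qed.

Lemma abs_nat_gt0 x : x <> 0%Z -> 0 < Z.abs_nat x.
Proof. by move=> Hx; apply/ltP; lia. Qed.

Lemma vp_mul p x y : x <> 0%Z -> y <> 0%Z -> vp p (x * y) = (vp p x + vp p y)%coq_nat.
Proof. by move=> Hx Hy; rewrite /vp Zabs2Nat.inj_mul lognM // abs_nat_gt0. Qed.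

Lemma vp_pow p x k : x <> 0%Z -> (0 <= k)%Z ->
  vp p (x ^ k) = (Z.to_nat k * vp p x)%coq_nat.
Proof.
move=> Hx Hk; rewrite -(Z2Nat.id k Hk) Nat2Z.id.
elim: (Z.to_nat k) => [|n IH]; first by rewrite /vp /= logn1.
rewrite Nat2Z.inj_succ Z.pow_succ_r; last lia.
rewrite Z.mul_comm vp_mul //; last by apply: Z.pow_nonzero; lia.
by rewrite IH; lia.
Qed.

Lemma vp_opp p x : vp p (- x) = vp p x.
Proof. by rewrite /vp; f_equal; lia. Qed.

Lemma vp_abs p x : vp p (Z.abs x) = vp p x.
Proof. by rewrite /vp; f_equal; lia. Qed.

Lemma pow_divide_iff_le_vp p x k : is_prime p -> x <> 0%Z ->
  (Z.of_nat p ^ Z.of_nat k | x)%Z <-> (k <= vp p x)%coq_nat.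
Proof.
move=> Hp Hx; have -> : (Z.of_nat p ^ Z.of_nat k = Z.of_nat (p ^ k))%Z.
  by rewrite -Nat2Z.inj_pow; congr Z.of_nat; elim: k => //= k IH; rewrite expnS IH.
by rewrite Zdivide_dvdn pfactor_dvdn ?abs_nat_gt0 //; split=> /leP.
Qed.

Lemma eq_of_vp x y : (0 < x)%Z -> (0 < y)%Z ->
  (forall p, is_prime p -> vp p x = vp p y) -> x = y.
Proof.
move=> Hx Hy H; suff : Z.abs_nat x = Z.abs_nat y by lia.
apply: eqn_from_log; rewrite ?abs_nat_gt0 //; try lia.
by move=> p; case Hp: (prime p); [exact: H | rewrite /logn Hp].
Qed.

Lemma exists_prime_divisor (n : Z) : (1 < n)%Z ->
  exists p, is_prime p /\ (Z.of_nat p | n)%Z.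
Proof.
move=> Hn; have /pdivP [p Hp Hd] : 1 < Z.abs_nat n by apply/ltP; lia.
by exists p; split => //; apply/Zdivide_dvdn.
Qed.

Definition prime_product (N : nat) (f : nat -> nat) : nat :=
  \prod_(p < N) p ^ (if prime p then f p else 0).

Lemma prime_product_gt0 N f : 0 < prime_product N f.
Proof.
apply: prodn_gt0 => i; rewrite expn_gt0.
by case Hp: (prime i); rewrite ?(prime_gt0 Hp) ?orbT.
Qed.

Lemma logn_prime_product N f q : prime q ->
  logn q (prime_product N f) = if q < N then f q else 0.
Proof.
move=> Hq; elim: N => [|N IH]; first by rewrite /prime_product big_ord0 logn1.
rewrite /prime_product big_ord_recr /= lognM ?prime_product_gt0 //; last first.
  by rewrite expn_gt0; case Hp: (prime N); rewrite ?(prime_gt0 Hp) ?orbT.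
rewrite -/(prime_product N f) IH lognX ltnS.
case Hp: (prime N); last first.
  by rewrite mul0n addn0; case: ltngtP => // E; move: Hp; rewrite -E Hq.
by rewrite logn_prime //; case: ltngtP => [_|_|->] /=; rewrite ?muln0 ?muln1 ?addn0.
Qed.

Lemma exists_vp (X : Z) (f : nat -> nat) : X <> 0%Z ->
  (forall p, is_prime p -> (0 < f p)%coq_nat -> (Z.of_nat p | X)%Z) ->
  exists y, (0 < y)%Z /\ forall p, is_prime p -> vp p y = f p.
Proof.
move=> HX Hf; exists (Z.of_nat (prime_product (Z.abs_nat X).+1 f)); split.
  by have /ltP := prime_product_gt0 (Z.abs_nat X).+1 f; lia.
move=> p Hp; rewrite /vp Zabs2Nat.id logn_prime_product //.
case: ifP => // /negbT; rewrite -leqNgt; case: (posnP (f p)) => // /ltP fp_gt0.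
move: (Hf p Hp fp_gt0) => /Zdivide_dvdn /(dvdn_leq (abs_nat_gt0 _ HX)).
by rewrite leqNgt => /negP.
Qed.

End Valuation.

Import Valuation.
Open Scope Z_scope.

Lemma prime_divide_iff_vp_pos p x : is_prime p -> x <> 0 ->
  (Z.of_nat p | x) <-> (0 < vp p x)%nat.
Proof.
  intros Hp Hx. rewrite <- (pow_divide_iff_le_vp p x 1 Hp Hx). now rewrite Z.pow_1_r.
Qed.

Lemma pow_divide_of_le_vp p x k : is_prime p -> (x <> 0 -> (k <= vp p x)%nat) ->
  (Z.of_nat p ^ Z.of_nat k | x).
Proof.
  intros Hp H. destruct (Z.eq_dec x 0) as [->|Hx]; [apply Z.divide_0_r|].
  apply pow_divide_iff_le_vp; auto.
Qed.

Lemma vp_le_of_divide p d x : is_prime p -> d <> 0 -> x <> 0 -> (d | x) ->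
  (vp p d <= vp p x)%nat.
Proof.
  intros Hp Hd Hx H. apply pow_divide_iff_le_vp; auto.
  apply Z.divide_trans with d; auto. apply pow_divide_iff_le_vp; auto.
Qed.

Lemma vp_gcd p a b : is_prime p -> a <> 0 -> b <> 0 ->
  vp p (Z.gcd a b) = Nat.min (vp p a) (vp p b).
Proof.
  intros Hp Ha Hb. assert (Hg : Z.gcd a b <> 0) by (intros E; apply Z.gcd_eq_0 in E; lia).
  assert (Hle : forall k, (k <= vp p (Z.gcd a b) <-> k <= vp p a /\ k <= vp p b)%nat).
  { intros k. rewrite <- !pow_divide_iff_le_vp by auto. split.
    - intros H. split; eapply Z.divide_trans; eauto using Z.gcd_divide_l, Z.gcd_divide_r.
    - intros [Da Db]. now apply Z.gcd_greatest. }
  pose proof (proj1 (Hle _) (le_n _)).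
  pose proof (proj2 (Hle (Nat.min (vp p a) (vp p b)))). lia.
Qed.

Lemma vp_add_eq_l p a b : is_prime p -> a <> 0 ->
  (Z.of_nat p ^ Z.of_nat (S (vp p a)) | b) -> vp p (a + b) = vp p a.
Proof.
  intros Hp Ha Hb.
  assert (Hpa : (Z.of_nat p ^ Z.of_nat (vp p a) | a)) by (apply pow_divide_iff_le_vp; auto).
  assert (Hpb : (Z.of_nat p ^ Z.of_nat (vp p a) | b)).
  { apply Z.divide_trans with (Z.of_nat p ^ Z.of_nat (S (vp p a))); auto.
    rewrite Nat2Z.inj_succ, Z.pow_succ_r by lia. apply Z.divide_factor_r. }
  assert (Hnot : ~ (Z.of_nat p ^ Z.of_nat (S (vp p a)) | a + b)).
  { intros D. pose proof (Z.divide_sub_r _ _ _ D Hb) as Da.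
    replace (a + b - b) with a in Da by ring.
    rewrite pow_divide_iff_le_vp in Da by auto. lia. }
  assert (Hab : a + b <> 0) by (intros E; rewrite E in Hnot; apply Hnot, Z.divide_0_r).
  rewrite pow_divide_iff_le_vp in Hnot by auto.
  assert (vp p a <= vp p (a + b))%nat.
  { apply pow_divide_iff_le_vp; auto. now apply Z.divide_add_r. }
  lia.
Qed.

Lemma divide_of_vp_le d x : 0 < d -> x <> 0 ->
  (forall p, is_prime p -> (vp p d <= vp p x)%nat) -> (d | x).
Proof.
  intros Hd Hx H.
  destruct (exists_vp x (fun p => vp p x - vp p d)%nat Hx) as [q [Hq Hv]].
  { intros p Hp Hpos. apply prime_divide_iff_vp_pos; auto. lia. }
  assert (E : d * q = Z.abs x).
  { apply eq_of_vp; try lia. intros p Hp.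
    rewrite vp_mul, vp_abs, Hv by (auto; lia). specialize (H p Hp). lia. }
  exists (Z.sgn x * q). destruct (Z.abs_spec x) as [[? Ex]|[? Ex]].
  - rewrite Z.sgn_pos by lia. lia.
  - rewrite Z.sgn_neg by lia. lia.
Qed.

Lemma gcd_eq1_iff_primes a b : Z.gcd a b = 1 <->
  forall p, is_prime p -> (Z.of_nat p | a) -> (Z.of_nat p | b) -> False.
Proof.
  split.
  - intros H p Hp Ha Hb. pose proof (Z.gcd_greatest _ _ _ Ha Hb) as Hd. rewrite H in Hd.
    apply Z.divide_1_r_nonneg in Hd; [|lia]. pose proof (is_prime_gt1 p Hp). lia.
  - intros H. pose proof (Z.gcd_nonneg a b).
    destruct (Z.eq_dec (Z.gcd a b) 0) as [E|E].
    + apply Z.gcd_eq_0 in E. destruct E as [-> ->]. exfalso.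
      destruct (exists_prime_divisor 2) as [p [Hp _]]; [lia|].
      apply (H p Hp); apply Z.divide_0_r.
    + destruct (Z.eq_dec (Z.gcd a b) 1) as [E1|E1]; [exact E1|].
      destruct (exists_prime_divisor (Z.gcd a b)) as [p [Hp Hd]]; [lia|].
      exfalso. apply (H p Hp); eapply Z.divide_trans; eauto using Z.gcd_divide_l, Z.gcd_divide_r.
Qed.

Lemma gcd_eq1_iff_vp a b : b <> 0 ->
  Z.gcd a b = 1 <-> forall p, is_prime p -> (Z.of_nat p | a) -> vp p b = 0%nat.
Proof.
  intros Hb. rewrite gcd_eq1_iff_primes. split.
  - intros H p Hp Ha. destruct (vp p b) eqn:E; auto. exfalso.
    apply (H p Hp Ha). apply prime_divide_iff_vp_pos; auto. lia.
  - intros H p Hp Ha D. rewrite prime_divide_iff_vp_pos in D by auto.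
    specialize (H p Hp Ha). lia.
Qed.

Lemma gcd_eq1_iff_vp_pos a b : a <> 0 -> b <> 0 ->
  Z.gcd a b = 1 <-> forall p, is_prime p -> (0 < vp p a)%nat -> vp p b = 0%nat.
Proof.
  intros Ha Hb. rewrite gcd_eq1_iff_vp by auto.
  split; intros H p Hp; specialize (H p Hp); rewrite prime_divide_iff_vp_pos in * by auto; auto.
Qed.

Lemma gcd_eq1_same_support a b b' : b <> 0 -> b' <> 0 ->
  (forall p, is_prime p -> vp p b = 0%nat <-> vp p b' = 0%nat) ->
  Z.gcd a b = 1 <-> Z.gcd a b' = 1.
Proof.
  intros Hb Hb' H. rewrite !gcd_eq1_iff_vp by auto.
  split; intros G p Hp Hd; apply (H p Hp); auto.
Qed.

(** * Exponents at one prime *)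

Section LocalExponents.
Local Open Scope nat_scope.

Definition wt_x1 (v1 v2 v3 v4 v5 v6 v7 v8 : nat) : nat :=
  2*v1 + 4*v2 + 6*v3 + 5*v4 + 4*v5 + 3*v6 + 3*v7 + 2*v8.
Definition wt_g (v1 v2 v3 v4 v5 v6 v7 : nat) : nat :=
  2*v1 + 3*v2 + 4*v3 + 3*v4 + 2*v5 + v6 + 2*v7.
Definition wt_x0 (v1 v2 v3 v4 v5 v6 v7 v8 : nat) : nat :=
  3*v1 + 6*v2 + 9*v3 + 7*v4 + 5*v5 + 3*v6 + 5*v7 + v8.

(* The local form, at one prime, of the coprimality conditions on
   [eta_3, ..., eta_8, alpha_2]; [w] stands for the valuation of [alpha_2]. *)
Definition admissible (v1 v2 v3 v4 v5 v6 v7 v8 w : nat) : Prop :=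
  (0 < v8 -> v1 = 0 /\ v2 = 0 /\ v3 = 0 /\ v4 = 0 /\ v5 = 0 /\ v7 = 0) /\
  (0 < v7 -> v1 = 0 /\ v2 = 0 /\ v4 = 0 /\ v5 = 0 /\ v6 = 0) /\
  (0 < v6 -> v1 = 0 /\ v2 = 0 /\ v3 = 0 /\ v4 = 0) /\
  (0 < v5 -> v1 = 0 /\ v2 = 0 /\ v3 = 0) /\
  (0 < v4 -> v1 = 0 /\ v2 = 0) /\
  (0 < v3 -> v1 = 0) /\
  (0 < w -> v1 = 0 /\ v2 = 0 /\ v3 = 0 /\ v4 = 0 /\ v5 = 0 /\ v6 = 0 /\ v8 = 0).

(* Inverse of [v |-> (wt_x1 v, wt_g v, wt_x0 v + w)] on admissible exponents.
   An admissible support is a pair of "adjacent" [eta]'s, whose weights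
   [(wt_x1, wt_g)] span one chamber of the cone [m <= n], the chambers being
   ordered by the slope [m/n]; on the ray [3 m = 2 n], shared by [eta_3] and
   [eta_7], the value of [z] decides. *)
Definition local_exponents (n m z : nat) : nat*nat*nat*nat*nat*nat*nat*nat :=
  if n =? 0 then (0,0,0,0,0,0,0,0)
  else if 3*m <? n then (0,0,0,0,0,m,0,(n-3*m)/2)
  else if 2*m <? n then (0,0,0,0,(3*m-n)/2,n-2*m,0,0)
  else if 5*m <? 3*n then (0,0,0,2*m-n,(3*n-5*m)/2,0,0,0)
  else if 3*m <? 2*n then (0,0,(5*m-3*n)/2,2*n-3*m,0,0,0,0)
  else if 3*m =? 2*n then
     (if 3*z <=? 5*n then (0,0,(5*n-3*z)/3,0,0,0,2*z-3*n,0)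
      else (0,0,0,0,0,0,n/3,0))
  else if 4*m <? 3*n then (0,3*m-2*n,(3*n-4*m)/2,0,0,0,0,0)
  else ((4*m-3*n)/2,n-m,0,0,0,0,0,0).

Ltac case_comparisons :=
  repeat match goal with
  | |- context [Nat.eqb ?a ?b] => destruct (Nat.eqb_spec a b)
  | |- context [Nat.ltb ?a ?b] => destruct (Nat.ltb_spec a b)
  | |- context [Nat.leb ?a ?b] => destruct (Nat.leb_spec a b)
  end.

Ltac name_quotients :=
  repeat match goal with
  | |- context [?a / ?b] =>
      let q := fresh "q" in
      pose proof (Nat.div_mod a b ltac:(lia));
      pose proof (Nat.mod_upper_bound a b ltac:(lia));
      set (q := a / b) in *
  end.

Lemma local_exponents_spec n m z :
  m <= n ->
  (3*m < 2*n -> 2*z = n + 3*m) ->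
  (2*n < 3*m -> 2*z = 3*n) ->
  (0 < n -> 3*m = 2*n -> 3*n <= 2*z) ->
  let '(v1,v2,v3,v4,v5,v6,v7,v8) := local_exponents n m z in
  wt_x1 v1 v2 v3 v4 v5 v6 v7 v8 = n /\ wt_g v1 v2 v3 v4 v5 v6 v7 = m /\
  wt_x0 v1 v2 v3 v4 v5 v6 v7 v8 <= z /\
  admissible v1 v2 v3 v4 v5 v6 v7 v8 (z - wt_x0 v1 v2 v3 v4 v5 v6 v7 v8).
Proof.
  intros. unfold local_exponents, admissible, wt_x1, wt_g, wt_x0.
  case_comparisons; name_quotients; lia.
Qed.

Ltac zero_out v H :=
  destruct (Nat.eq_dec v 0) as [->|?];
  [clear H | let K := fresh in
             pose proof (H ltac:(lia)) as K; clear H; decompose [and] K; subst].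

Lemma local_exponents_of_admissible v1 v2 v3 v4 v5 v6 v7 v8 w :
  admissible v1 v2 v3 v4 v5 v6 v7 v8 w ->
  local_exponents (wt_x1 v1 v2 v3 v4 v5 v6 v7 v8) (wt_g v1 v2 v3 v4 v5 v6 v7)
    (wt_x0 v1 v2 v3 v4 v5 v6 v7 v8 + w) = (v1,v2,v3,v4,v5,v6,v7,v8).
Proof.
  unfold admissible, local_exponents, wt_x1, wt_g, wt_x0. intros (H8&H7&H6&H5&H4&H3&Hw).
  zero_out v8 H8; try zero_out v7 H7; try zero_out v6 H6; try zero_out v5 H5;
    try zero_out v4 H4; try zero_out v3 H3; try zero_out w Hw;
    case_comparisons; name_quotients;
    repeat match goal with |- (_, _) = (_, _) => apply pair_equal_spec; split end; lia.
Qed.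

End LocalExponents.

(** * The torsor *)

Definition x1_mon (e1 e2 e3 e4 e5 e6 e7 e8 : Z) : Z :=
  e1^2 * e2^4 * e3^6 * e4^5 * e5^4 * e6^3 * e7^3 * e8^2.
(* [g_mon] is [gcd x1 x2] at the image of a torsor point (gcd_x1_x2_iff). *)
Definition g_mon (e1 e2 e3 e4 e5 e6 e7 : Z) : Z :=
  e1^2 * e2^3 * e3^4 * e4^3 * e5^2 * e6 * e7^2.
Definition x0_mon (e1 e2 e3 e4 e5 e6 e7 e8 : Z) : Z :=
  e1^3 * e2^6 * e3^9 * e4^7 * e5^5 * e6^3 * e7^5 * e8.

Definition torsor_point (e1 e2 e3 e4 e5 e6 e7 e8 a1 a2 a3 : Z) : Prop :=
  e1^2 * e2 * a1^3 + e7 * a2^2 + e4 * e5^2 * e6^3 * e8^4 * a3 = 0 /\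
  Z.gcd a1 (e2 * e3 * e4 * e5 * e6 * e7 * e8) = 1 /\
  Z.gcd a2 (e1 * e2 * e3 * e4 * e5 * e6 * e8) = 1 /\
  Z.gcd a3 (e1 * e2 * e3 * e4 * e5 * e6 * e7) = 1 /\
  Z.gcd e8 (e1 * e2 * e3 * e4 * e5 * e7) = 1 /\
  Z.gcd e7 (e1 * e2 * e4 * e5 * e6) = 1 /\
  Z.gcd e6 (e1 * e2 * e3 * e4) = 1 /\
  Z.gcd e5 (e1 * e2 * e3) = 1 /\
  Z.gcd e4 (e1 * e2) = 1 /\
  Z.gcd e3 e1 = 1.

Definition primitive_solution (x0 x1 x2 x3 : Z) : Prop :=
  x0 * x0 = x1 * x2^3 + x1^3 * x3 /\ Z.gcd (Z.gcd x1 x2) x3 = 1.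

Ltac positivity :=
  unfold x1_mon, g_mon, x0_mon;
  repeat match goal with
  | |- 0 < _ * _ => apply Z.mul_pos_pos
  | |- 0 < _ ^ _ => apply Z.pow_pos_nonneg; [|lia]
  end; first [assumption | lia].

Ltac nonzero := match goal with |- ?x <> 0 => enough (0 < x) by lia; positivity end.

Ltac compute_to_nat :=
  repeat match goal with |- context [Z.to_nat (Zpos ?k)] =>
    let c := eval compute in (Z.to_nat (Zpos k)) in change (Z.to_nat (Zpos k)) with c end.

Ltac vp_expand :=
  repeat (rewrite vp_mul by nonzero);
  repeat (rewrite vp_pow by (try nonzero; lia));
  compute_to_nat.

Section TorsorPoint.

Variables e1 e2 e3 e4 e5 e6 e7 e8 a1 a2 a3 : Z.
Hypotheses (He1 : 0 < e1) (He2 : 0 < e2) (He3 : 0 < e3) (He4 : 0 < e4)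
  (He5 : 0 < e5) (He6 : 0 < e6) (He7 : 0 < e7) (He8 : 0 < e8) (Ha2 : 0 < a2).

Lemma vp_x1_mon p : vp p (x1_mon e1 e2 e3 e4 e5 e6 e7 e8) =
  wt_x1 (vp p e1) (vp p e2) (vp p e3) (vp p e4) (vp p e5) (vp p e6) (vp p e7) (vp p e8).
Proof. unfold x1_mon, wt_x1. vp_expand. lia. Qed.

Lemma vp_g_mon p : vp p (g_mon e1 e2 e3 e4 e5 e6 e7) =
  wt_g (vp p e1) (vp p e2) (vp p e3) (vp p e4) (vp p e5) (vp p e6) (vp p e7).
Proof. unfold g_mon, wt_g. vp_expand. lia. Qed.

Lemma vp_x0_mon p : vp p (x0_mon e1 e2 e3 e4 e5 e6 e7 e8) =
  wt_x0 (vp p e1) (vp p e2) (vp p e3) (vp p e4) (vp p e5) (vp p e6) (vp p e7) (vp p e8).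
Proof. unfold x0_mon, wt_x0. vp_expand. lia. Qed.

Lemma torsor_equation_iff :
  e1^2 * e2 * a1^3 + e7 * a2^2 + e4 * e5^2 * e6^3 * e8^4 * a3 = 0 <->
  (x0_mon e1 e2 e3 e4 e5 e6 e7 e8 * a2) * (x0_mon e1 e2 e3 e4 e5 e6 e7 e8 * a2) =
  x1_mon e1 e2 e3 e4 e5 e6 e7 e8 * (- (g_mon e1 e2 e3 e4 e5 e6 e7 * a1))^3 +
  x1_mon e1 e2 e3 e4 e5 e6 e7 e8 ^ 3 * (- a3).
Proof.
  (* Along the torsor map, [x0^2 - x1 x2^3 - x1^3 x3] is [c] times the torsor
     equation. *)
  set (c := e1^6 * e2^12 * e3^18 * e4^14 * e5^10 * e6^6 * e7^9 * e8^2).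
  assert (Hc : 0 < c) by (unfold c; positivity).
  transitivity (c * (e1^2 * e2 * a1^3 + e7 * a2^2 + e4 * e5^2 * e6^3 * e8^4 * a3) = 0).
  { split; intros E.
    - rewrite E. ring.
    - apply Z.mul_eq_0 in E. destruct E; [lia|assumption]. }
  symmetry. rewrite <- Z.sub_move_0_r.
  match goal with |- ?d = 0 <-> _ =>
    replace d with (c * (e1^2 * e2 * a1^3 + e7 * a2^2 + e4 * e5^2 * e6^3 * e8^4 * a3))
      by (unfold c, x0_mon, x1_mon, g_mon; ring) end.
  reflexivity.
Qed.

Lemma gcd_x1_x2_iff :
  Z.gcd (x1_mon e1 e2 e3 e4 e5 e6 e7 e8) (- (g_mon e1 e2 e3 e4 e5 e6 e7 * a1))
    = g_mon e1 e2 e3 e4 e5 e6 e7 <->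
  Z.gcd a1 (e2 * e3 * e4 * e5 * e6 * e7 * e8) = 1.
Proof.
  set (u := e2 * e3^2 * e4^2 * e5^2 * e6^2 * e7 * e8^2).
  assert (Hg : 0 < g_mon e1 e2 e3 e4 e5 e6 e7) by positivity.
  replace (x1_mon e1 e2 e3 e4 e5 e6 e7 e8) with (g_mon e1 e2 e3 e4 e5 e6 e7 * u)
    by (unfold x1_mon, g_mon, u; ring).
  replace (- (g_mon e1 e2 e3 e4 e5 e6 e7 * a1)) with (g_mon e1 e2 e3 e4 e5 e6 e7 * - a1)
    by ring.
  rewrite Z.gcd_mul_mono_l, Z.abs_eq, Z.gcd_comm, Z.gcd_opp_l by lia.
  transitivity (Z.gcd a1 u = 1); [split; intros; nia|].
  apply gcd_eq1_same_support; try nonzero.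
  intros p _. unfold u. vp_expand. lia.
Qed.

Lemma gcd_g_x3_iff :
  Z.gcd (g_mon e1 e2 e3 e4 e5 e6 e7) (- a3) = 1 <->
  Z.gcd a3 (e1 * e2 * e3 * e4 * e5 * e6 * e7) = 1.
Proof.
  rewrite Z.gcd_comm, Z.gcd_opp_l.
  apply gcd_eq1_same_support; try nonzero.
  intros p _. unfold g_mon. vp_expand. lia.
Qed.

Lemma coprime_iff_admissible :
  (Z.gcd a2 (e1 * e2 * e3 * e4 * e5 * e6 * e8) = 1 /\
   Z.gcd e8 (e1 * e2 * e3 * e4 * e5 * e7) = 1 /\
   Z.gcd e7 (e1 * e2 * e4 * e5 * e6) = 1 /\
   Z.gcd e6 (e1 * e2 * e3 * e4) = 1 /\
   Z.gcd e5 (e1 * e2 * e3) = 1 /\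
   Z.gcd e4 (e1 * e2) = 1 /\
   Z.gcd e3 e1 = 1) <->
  forall p, is_prime p -> admissible (vp p e1) (vp p e2) (vp p e3) (vp p e4)
                            (vp p e5) (vp p e6) (vp p e7) (vp p e8) (vp p a2).
Proof.
  rewrite !gcd_eq1_iff_vp_pos by nonzero. unfold admissible. split.
  - intros (G2&G8&G7&G6&G5&G4&G3) p Hp.
    specialize (G2 p Hp); specialize (G8 p Hp); specialize (G7 p Hp);
    specialize (G6 p Hp); specialize (G5 p Hp); specialize (G4 p Hp); specialize (G3 p Hp).
    revert G2 G8 G7 G6 G5 G4 G3. vp_expand. lia.
  - intros H. repeat split; intros p Hp; specialize (H p Hp); vp_expand; lia.
Qed.

Lemma torsor_point_iff :
  torsor_point e1 e2 e3 e4 e5 e6 e7 e8 a1 a2 a3 <->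
  primitive_solution (x0_mon e1 e2 e3 e4 e5 e6 e7 e8 * a2) (x1_mon e1 e2 e3 e4 e5 e6 e7 e8)
    (- (g_mon e1 e2 e3 e4 e5 e6 e7 * a1)) (- a3) /\
  Z.gcd (x1_mon e1 e2 e3 e4 e5 e6 e7 e8) (- (g_mon e1 e2 e3 e4 e5 e6 e7 * a1))
    = g_mon e1 e2 e3 e4 e5 e6 e7 /\
  forall p, is_prime p -> admissible (vp p e1) (vp p e2) (vp p e3) (vp p e4)
                            (vp p e5) (vp p e6) (vp p e7) (vp p e8) (vp p a2).
Proof.
  unfold torsor_point, primitive_solution.
  rewrite torsor_equation_iff, <- coprime_iff_admissible, <- gcd_g_x3_iff.
  split.
  - intros (E & G1 & G). apply gcd_x1_x2_iff in G1 as Gx. rewrite Gx. tauto.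
  - intros ((E & G) & Gx & A). apply gcd_x1_x2_iff in Gx as G1. rewrite Gx in G. tauto.
Qed.

Lemma local_exponents_torsor p : is_prime p ->
  torsor_point e1 e2 e3 e4 e5 e6 e7 e8 a1 a2 a3 ->
  local_exponents (vp p (x1_mon e1 e2 e3 e4 e5 e6 e7 e8)) (vp p (g_mon e1 e2 e3 e4 e5 e6 e7))
    (vp p (x0_mon e1 e2 e3 e4 e5 e6 e7 e8 * a2))
  = (vp p e1, vp p e2, vp p e3, vp p e4, vp p e5, vp p e6, vp p e7, vp p e8).
Proof.
  intros Hp T. apply torsor_point_iff in T as (_ & _ & A).
  rewrite vp_x1_mon, vp_g_mon, vp_mul, vp_x0_mon by (try nonzero; lia).
  exact (local_exponents_of_admissible _ _ _ _ _ _ _ _ _ (A p Hp)).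
Qed.

End TorsorPoint.

Definition on_torsor (t : list Z) : Prop :=
  match t with
  | [e1; e2; e3; e4; e5; e6; e7; e8; a1; a2; a3] =>
      0 < e1 /\ 0 < e2 /\ 0 < e3 /\ 0 < e4 /\ 0 < e5 /\ 0 < e6 /\ 0 < e7 /\ 0 < e8 /\
      0 < a2 /\ torsor_point e1 e2 e3 e4 e5 e6 e7 e8 a1 a2 a3
  | _ => False
  end.

Definition torsor_map (t : list Z) : Z * Z * Z * Z :=
  match t with
  | [e1; e2; e3; e4; e5; e6; e7; e8; a1; a2; a3] =>
      (x0_mon e1 e2 e3 e4 e5 e6 e7 e8 * a2, x1_mon e1 e2 e3 e4 e5 e6 e7 e8,
       - (g_mon e1 e2 e3 e4 e5 e6 e7 * a1), - a3)
  | _ => (0, 0, 0, 0)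
  end.

Lemma torsor_map_solution t x0 x1 x2 x3 : on_torsor t ->
  torsor_map t = (x0, x1, x2, x3) -> 0 < x0 /\ 0 < x1 /\ primitive_solution x0 x1 x2 x3.
Proof.
  intros Ht M. destruct t as [|e1 [|e2 [|e3 [|e4 [|e5 [|e6 [|e7 [|e8 [|a1 [|a2 [|a3 [|]]]]]]]]]]]]; try contradiction.
  destruct Ht as (He1&He2&He3&He4&He5&He6&He7&He8&Ha2&T).
  injection M as <- <- <- <-. apply torsor_point_iff in T as (S & _); auto.
  split; [positivity|split; [positivity|exact S]].
Qed.

Lemma torsor_map_inj t t' : on_torsor t -> on_torsor t' ->
  torsor_map t = torsor_map t' -> t = t'.
Proof.
  intros Ht Ht' M.
  destruct t as [|e1 [|e2 [|e3 [|e4 [|e5 [|e6 [|e7 [|e8 [|a1 [|a2 [|a3 [|]]]]]]]]]]]]; try contradiction.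
  destruct t' as [|f1 [|f2 [|f3 [|f4 [|f5 [|f6 [|f7 [|f8 [|b1 [|b2 [|b3 [|]]]]]]]]]]]]; try contradiction.
  destruct Ht as (He1&He2&He3&He4&He5&He6&He7&He8&Ha2&T),
    Ht' as (Hf1&Hf2&Hf3&Hf4&Hf5&Hf6&Hf7&Hf8&Hb2&T').
  injection M as E0 E1 E2 E3.
  assert (Eg : g_mon e1 e2 e3 e4 e5 e6 e7 = g_mon f1 f2 f3 f4 f5 f6 f7).
  { apply torsor_point_iff in T as (_ & Gx & _), T' as (_ & Gx' & _); auto.
    now rewrite <- Gx, <- Gx', E1, E2. }
  assert (V : forall p, is_prime p ->
    (vp p e1, vp p e2, vp p e3, vp p e4, vp p e5, vp p e6, vp p e7, vp p e8) =
    (vp p f1, vp p f2, vp p f3, vp p f4, vp p f5, vp p f6, vp p f7, vp p f8)).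
  { intros p Hp.
    rewrite <- (local_exponents_torsor e1 e2 e3 e4 e5 e6 e7 e8 a1 a2 a3),
      <- (local_exponents_torsor f1 f2 f3 f4 f5 f6 f7 f8 b1 b2 b3) by auto.
    now rewrite E0, E1, Eg. }
  assert (e1 = f1 /\ e2 = f2 /\ e3 = f3 /\ e4 = f4 /\ e5 = f5 /\ e6 = f6 /\ e7 = f7 /\ e8 = f8)
    as (<-&<-&<-&<-&<-&<-&<-&<-).
  { repeat split; apply eq_of_vp; auto; intros p Hp; specialize (V p Hp); now inversion V. }
  assert (0 < g_mon e1 e2 e3 e4 e5 e6 e7) by positivity.
  assert (0 < x0_mon e1 e2 e3 e4 e5 e6 e7 e8) by positivity.
  repeat f_equal; nia.
Qed.

(* With [n = vp p x1] and [m = vp p (gcd x1 x2)]: [x0^2 = x1 W] for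
   [W = x2^3 + x1^2 x3], and unless [3 m = 2 n] one summand of [W] has
   strictly smaller valuation than the other. *)
Lemma solution_local_constraints p x0 x1 x2 x3 : is_prime p -> 0 < x0 -> 0 < x1 ->
  primitive_solution x0 x1 x2 x3 ->
  (vp p (Z.gcd x1 x2) <= vp p x1)%nat /\
  (3 * vp p (Z.gcd x1 x2) < 2 * vp p x1 -> 2 * vp p x0 = vp p x1 + 3 * vp p (Z.gcd x1 x2))%nat /\
  (2 * vp p x1 < 3 * vp p (Z.gcd x1 x2) -> 2 * vp p x0 = 3 * vp p x1)%nat /\
  (0 < vp p x1 -> 3 * vp p (Z.gcd x1 x2) = 2 * vp p x1 -> 3 * vp p x1 <= 2 * vp p x0)%nat.
Proof.
  intros Hp H0 H1 [E G].
  set (n := vp p x1). set (m := vp p (Z.gcd x1 x2)). set (z := vp p x0).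
  set (W := x2^3 + x1^2 * x3).
  assert (EW : x0 * x0 = x1 * W) by (unfold W; rewrite E; ring).
  assert (HW : W <> 0) by (intros HW; rewrite HW in EW; nia).
  assert (Hz : (2 * z = n + vp p W)%nat).
  { unfold z, n. rewrite <- vp_mul, <- EW, vp_mul by lia. lia. }
  assert (Hg : Z.gcd x1 x2 <> 0) by (intros Hg; apply Z.gcd_eq_0 in Hg; lia).
  assert (Hmn : (m <= n)%nat) by (apply vp_le_of_divide; auto using Z.gcd_divide_l; lia).
  assert (Dx2 : forall k, (k <= 3 * m)%nat -> (Z.of_nat p ^ Z.of_nat k | x2^3)).
  { intros k Hk. apply pow_divide_of_le_vp; auto. intros H2.
    assert (x2 <> 0) by (intros ->; apply H2; reflexivity).
    assert (m <= vp p x2)%nat by (apply vp_le_of_divide; auto using Z.gcd_divide_r).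
    rewrite vp_pow by lia. cbn. lia. }
  assert (Dx1 : forall k, (k <= 2 * n)%nat -> (Z.of_nat p ^ Z.of_nat k | x1^2 * x3)).
  { intros k Hk. apply pow_divide_of_le_vp; auto. intros H3.
    assert (x3 <> 0) by (intros ->; apply H3; ring).
    rewrite vp_mul, vp_pow by (try apply Z.pow_nonzero; lia). cbn. unfold n in Hk. lia. }
  repeat split; auto.
  - intros Hlt.
    assert (H2 : x2 <> 0) by (intros ->; unfold m, n in *; rewrite Z.gcd_0_r, Z.abs_eq in Hlt; lia).
    assert (Hv2 : vp p x2 = m) by (pose proof (vp_gcd p x1 x2 Hp ltac:(lia) H2); lia).
    assert (vp p W = 3 * m)%nat; [|lia].
    assert (V23 : vp p (x2^3) = (3 * m)%nat) by (rewrite vp_pow by lia; cbn; lia).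
    unfold W. rewrite vp_add_eq_l; auto.
    + apply Z.pow_nonzero; lia.
    + rewrite V23. apply Dx1. lia.
  - intros Hlt.
    assert (Hp3 : ~ (Z.of_nat p | x3)).
    { intros D. apply (proj1 (gcd_eq1_iff_primes _ _) G p Hp); auto.
      apply prime_divide_iff_vp_pos; auto. lia. }
    assert (H3 : x3 <> 0) by (intros ->; apply Hp3, Z.divide_0_r).
    assert (V3 : vp p x3 = 0%nat).
    { destruct (vp p x3) eqn:V; auto. exfalso. apply Hp3, prime_divide_iff_vp_pos; auto. lia. }
    assert (vp p W = 2 * n)%nat; [|lia].
    assert (H13 : x1^2 * x3 <> 0) by (apply Z.neq_mul_0; split; [apply Z.pow_nonzero|]; lia).
    assert (V13 : vp p (x1^2 * x3) = (2 * n)%nat).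
    { rewrite vp_mul, vp_pow by (try apply Z.pow_nonzero; lia). cbn. unfold n. lia. }
    unfold W. rewrite Z.add_comm, vp_add_eq_l; auto.
    rewrite V13. apply Dx2. lia.
  - intros Hn Heq.
    assert (2 * n <= vp p W)%nat; [|lia].
    apply pow_divide_iff_le_vp; auto. unfold W. apply Z.divide_add_r; [apply Dx2|apply Dx1]; lia.
Qed.

Lemma exists_local_exponents (X : Z) (F : nat -> nat*nat*nat*nat*nat*nat*nat*nat) : X <> 0 ->
  (forall p, is_prime p -> vp p X = 0%nat -> F p = (0,0,0,0,0,0,0,0)%nat) ->
  exists e1 e2 e3 e4 e5 e6 e7 e8,
    0 < e1 /\ 0 < e2 /\ 0 < e3 /\ 0 < e4 /\ 0 < e5 /\ 0 < e6 /\ 0 < e7 /\ 0 < e8 /\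
    forall p, is_prime p ->
      (vp p e1, vp p e2, vp p e3, vp p e4, vp p e5, vp p e6, vp p e7, vp p e8) = F p.
Proof.
  intros HX HF.
  assert (C : forall pr : nat*nat*nat*nat*nat*nat*nat*nat -> nat,
    pr (0,0,0,0,0,0,0,0)%nat = 0%nat ->
    exists e, 0 < e /\ forall p, is_prime p -> vp p e = pr (F p)).
  { intros pr Hpr. apply (exists_vp X); auto. intros p Hp Hpos.
    apply prime_divide_iff_vp_pos; auto.
    destruct (vp p X) eqn:V; [|lia]. rewrite HF in Hpos by auto. lia. }
  destruct (C (fun '(v,_,_,_,_,_,_,_) => v) eq_refl) as [e1 [He1 V1]].
  destruct (C (fun '(_,v,_,_,_,_,_,_) => v) eq_refl) as [e2 [He2 V2]].
  destruct (C (fun '(_,_,v,_,_,_,_,_) => v) eq_refl) as [e3 [He3 V3]].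
  destruct (C (fun '(_,_,_,v,_,_,_,_) => v) eq_refl) as [e4 [He4 V4]].
  destruct (C (fun '(_,_,_,_,v,_,_,_) => v) eq_refl) as [e5 [He5 V5]].
  destruct (C (fun '(_,_,_,_,_,v,_,_) => v) eq_refl) as [e6 [He6 V6]].
  destruct (C (fun '(_,_,_,_,_,_,v,_) => v) eq_refl) as [e7 [He7 V7]].
  destruct (C (fun '(_,_,_,_,_,_,_,v) => v) eq_refl) as [e8 [He8 V8]].
  exists e1, e2, e3, e4, e5, e6, e7, e8. repeat split; auto. intros p Hp.
  rewrite V1, V2, V3, V4, V5, V6, V7, V8 by auto.
  now destruct (F p) as [[[[[[[? ?] ?] ?] ?] ?] ?] ?].
Qed.

Lemma exists_torsor_coordinates x0 x1 x2 x3 : 0 < x0 -> 0 < x1 ->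
  primitive_solution x0 x1 x2 x3 ->
  exists e1 e2 e3 e4 e5 e6 e7 e8 a2,
    0 < e1 /\ 0 < e2 /\ 0 < e3 /\ 0 < e4 /\ 0 < e5 /\ 0 < e6 /\ 0 < e7 /\ 0 < e8 /\ 0 < a2 /\
    x1_mon e1 e2 e3 e4 e5 e6 e7 e8 = x1 /\ g_mon e1 e2 e3 e4 e5 e6 e7 = Z.gcd x1 x2 /\
    x0_mon e1 e2 e3 e4 e5 e6 e7 e8 * a2 = x0 /\
    forall p, is_prime p -> admissible (vp p e1) (vp p e2) (vp p e3) (vp p e4)
                              (vp p e5) (vp p e6) (vp p e7) (vp p e8) (vp p a2).
Proof.
  intros H0 H1 S. set (g := Z.gcd x1 x2).
  assert (Hg : 0 < g).
  { pose proof (Z.gcd_nonneg x1 x2). enough (g <> 0) by lia.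
    intros Hg. apply Z.gcd_eq_0 in Hg. lia. }
  destruct (exists_local_exponents x1 (fun p => local_exponents (vp p x1) (vp p g) (vp p x0)))
    as (e1&e2&e3&e4&e5&e6&e7&e8&He1&He2&He3&He4&He5&He6&He7&He8&V); [lia| |].
  { intros p _ Hn. now rewrite Hn. }
  assert (L : forall p, is_prime p ->
    wt_x1 (vp p e1) (vp p e2) (vp p e3) (vp p e4) (vp p e5) (vp p e6) (vp p e7) (vp p e8)
      = vp p x1 /\
    wt_g (vp p e1) (vp p e2) (vp p e3) (vp p e4) (vp p e5) (vp p e6) (vp p e7) = vp p g /\
    (wt_x0 (vp p e1) (vp p e2) (vp p e3) (vp p e4) (vp p e5) (vp p e6) (vp p e7) (vp p e8)
      <= vp p x0)%nat /\
    admissible (vp p e1) (vp p e2) (vp p e3) (vp p e4) (vp p e5) (vp p e6) (vp p e7) (vp p e8)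
      (vp p x0 - wt_x0 (vp p e1) (vp p e2) (vp p e3) (vp p e4) (vp p e5) (vp p e6)
                  (vp p e7) (vp p e8))).
  { intros p Hp. destruct (solution_local_constraints p x0 x1 x2 x3) as (C1&C2&C3&C4); auto.
    pose proof (local_exponents_spec _ _ _ C1 C2 C3 C4) as Spec.
    fold g in Spec. rewrite <- (V p Hp) in Spec. exact Spec. }
  assert (D0 : (x0_mon e1 e2 e3 e4 e5 e6 e7 e8 | x0)).
  { apply divide_of_vp_le; [positivity|lia|]. intros p Hp. rewrite vp_x0_mon by lia. apply L, Hp. }
  destruct D0 as [a2 X0].
  assert (Ha2 : 0 < a2) by (assert (0 < x0_mon e1 e2 e3 e4 e5 e6 e7 e8) by positivity; nia).
  exists e1, e2, e3, e4, e5, e6, e7, e8, a2. do 9 (split; [assumption|]). split; [|split; [|split]].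
  - apply eq_of_vp; [positivity|lia|]. intros p Hp. rewrite vp_x1_mon by lia. apply L, Hp.
  - apply eq_of_vp; [positivity|lia|]. intros p Hp. rewrite vp_g_mon by lia. apply L, Hp.
  - lia.
  - intros p Hp. destruct (L p Hp) as (_ & _ & Hle & A).
    replace (vp p a2) with (vp p x0 - wt_x0 (vp p e1) (vp p e2) (vp p e3) (vp p e4) (vp p e5)
      (vp p e6) (vp p e7) (vp p e8))%nat; auto.
    rewrite X0, vp_mul, vp_x0_mon by (try nonzero; lia). lia.
Qed.

Lemma torsor_map_surj x0 x1 x2 x3 : 0 < x0 -> 0 < x1 -> primitive_solution x0 x1 x2 x3 ->
  exists t, on_torsor t /\ torsor_map t = (x0, x1, x2, x3).
Proof.
  intros H0 H1 S.
  destruct (exists_torsor_coordinates x0 x1 x2 x3 H0 H1 S)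
    as (e1&e2&e3&e4&e5&e6&e7&e8&a2&He1&He2&He3&He4&He5&He6&He7&He8&Ha2&X1&Xg&X0&A).
  destruct (Z.gcd_divide_r x1 x2) as [q X2].
  assert (M : torsor_map [e1; e2; e3; e4; e5; e6; e7; e8; -q; a2; -x3] = (x0, x1, x2, x3)).
  { cbn. rewrite X0, X1, Xg. repeat f_equal; lia. }
  exists [e1; e2; e3; e4; e5; e6; e7; e8; -q; a2; -x3]. split; [|exact M].
  cbn. do 9 (split; [assumption|]). apply torsor_point_iff; auto.
  cbn in M. injection M as M0 M1 M2 M3. rewrite M0, M1, M2, M3, Xg. auto.
Qed.


Definition in_box (B : R) (x : Z * Z * Z * Z) : Prop :=
  let '(x0, x1, x2, x3) := x in
  (IZR (Z.abs x1) <= B /\ IZR (Z.abs x2) <= B /\ IZR (Z.abs x3) <= B /\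
   IZR (Z.abs x0) <= B ^ 2)%R.

Lemma SU_iff B x0 x1 x2 x3 : SU B (x0, x1, x2, x3) <->
  primitive_solution x0 x1 x2 x3 /\ x1 <> 0 /\ in_box B (x0, x1, x2, x3).
Proof. unfold SU, primitive_solution, in_box. tauto. Qed.

Lemma SN_iff B t : SN B t <-> on_torsor t /\ in_box B (torsor_map t).
Proof.
  destruct t as [|e1 [|e2 [|e3 [|e4 [|e5 [|e6 [|e7 [|e8 [|a1 [|a2 [|a3 [|]]]]]]]]]]]];
    try (cbn; tauto).
  cbn [SN on_torsor torsor_map in_box]. unfold torsor_point, x1_mon, g_mon, x0_mon.
  rewrite !Z.abs_opp. split.
  - intros (E&P1&P2&P3&P4&P5&P6&P7&P8&Pa&B1&B2&B3&B4&G).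
    rewrite (Z.abs_eq (_ * e8^2)), (Z.abs_eq (_ * a2)) by (apply Z.lt_le_incl; positivity).
    decompose [and] G. repeat split;
      first [assumption | match goal with H : 1 <= ?e |- 0 < ?e => clear - H; lia end].
  - intros ((P1&P2&P3&P4&P5&P6&P7&P8&Pa&E&G) & B1 & B2 & B3 & B4).
    rewrite (Z.abs_eq (_ * e8^2)) in B1 by (apply Z.lt_le_incl; positivity).
    rewrite (Z.abs_eq (_ * a2)) in B4 by (apply Z.lt_le_incl; positivity).
    decompose [and] G. repeat split;
      first [assumption | match goal with H : 0 < ?e |- 1 <= ?e => clear - H; lia end].
Qed.

Lemma SU_positive_iff B x0 x1 x2 x3 : SU B (x0, x1, x2, x3) /\ 0 < x0 /\ 0 < x1 <->
  exists t, SN B t /\ torsor_map t = (x0, x1, x2, x3).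
Proof.
  rewrite SU_iff. split.
  - intros ((S & _ & Hb) & H0 & H1).
    destruct (torsor_map_surj x0 x1 x2 x3 H0 H1 S) as (t & T & M).
    exists t. rewrite SN_iff, M. auto.
  - intros (t & Ht & M). rewrite SN_iff, M in Ht. destruct Ht as [T Hb].
    destruct (torsor_map_solution t x0 x1 x2 x3 T M) as (H0 & H1 & S).
    split; [split; [exact S | split; [lia | exact Hb]] | auto].
Qed.

(** * Sign classes *)

Definition sg (b : bool) : Z := if b then 1 else -1.

Definition sign_flip (s1 s2 : bool) (x : Z * Z * Z * Z) : Z * Z * Z * Z :=
  let '(x0, x1, x2, x3) := x in (sg s2 * x0, sg s1 * x1, sg s1 * x2, sg s1 * x3).

Lemma sign_flip_involutive s1 s2 x : sign_flip s1 s2 (sign_flip s1 s2 x) = x.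
Proof. destruct x as [[[x0 x1] x2] x3], s1, s2; cbn [sign_flip sg]; repeat f_equal; lia. Qed.

Lemma sg_mul s y : sg s * y = if s then y else - y.
Proof. destruct s; cbn [sg]; lia. Qed.

Lemma SU_sign_flip B s1 s2 x : SU B (sign_flip s1 s2 x) <-> SU B x.
Proof.
  destruct x as [[[x0 x1] x2] x3]. cbn [sign_flip]. rewrite !SU_iff.
  unfold primitive_solution, in_box. rewrite !sg_mul.
  destruct s1, s2; cbn iota; rewrite ?Z.gcd_opp_l, ?Z.gcd_opp_r, ?Z.abs_opp;
    split; intros ((Eq & Gc) & H1 & Hb); repeat split; try apply Hb; lia.
Qed.

Definition sign_class (B : R) (s1 s2 : bool) (x : Z * Z * Z * Z) : Prop :=
  SU B x /\ let '(x0, x1, _, _) := sign_flip s1 s2 x in 0 < x0 /\ 0 < x1.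

Lemma sign_class_iff B s1 s2 x :
  sign_class B s1 s2 x <-> exists t, SN B t /\ sign_flip s1 s2 (torsor_map t) = x.
Proof.
  unfold sign_class. rewrite <- SU_sign_flip with (s1 := s1) (s2 := s2).
  transitivity (exists t, SN B t /\ torsor_map t = sign_flip s1 s2 x).
  - destruct (sign_flip s1 s2 x) as [[[y0 y1] y2] y3]. rewrite <- SU_positive_iff. tauto.
  - split; intros (t & Ht & M); exists t; split; auto.
    + now rewrite M, sign_flip_involutive.
    + now rewrite <- M, sign_flip_involutive.
Qed.

Lemma sign_class_card B s1 s2 n : is_card (SN B) n -> is_card (sign_class B s1 s2) n.
Proof.
  intros HN. apply (card_image _ _ (fun t => sign_flip s1 s2 (torsor_map t)) n HN).
  - intros t t' Ht Ht' E. apply SN_iff in Ht as [Ht _], Ht' as [Ht' _].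
    apply torsor_map_inj; auto.
    now rewrite <- (sign_flip_involutive s1 s2 (torsor_map t)), E, sign_flip_involutive.
  - intros x. apply sign_class_iff.
Qed.

Lemma sign_class_unique B s1 s2 s1' s2' x :
  sign_class B s1 s2 x -> sign_class B s1' s2' x -> s1 = s1' /\ s2 = s2'.
Proof.
  destruct x as [[[x0 x1] x2] x3]. intros [_ H] [_ H'].
  destruct s1, s2, s1', s2'; cbn [sign_flip sg] in H, H'; split; auto; lia.
Qed.

Definition zero_locus (B : R) (x : Z * Z * Z * Z) : Prop :=
  SU B x /\ let '(x0, _, _, _) := x in x0 = 0.

Lemma SU_card B nN n0 : is_card (SN B) nN -> is_card (zero_locus B) n0 ->
  is_card (SU B) (n0 + (nN + (nN + (nN + nN))))%nat.
Proof.
  intros HN H0.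
  assert (Dz : forall s1 s2 x, zero_locus B x -> sign_class B s1 s2 x -> False).
  { intros s1 s2 [[[x0 x1] x2] x3] [_ Z0] [_ H]. subst x0. destruct s1, s2; cbn [sign_flip sg] in H; lia. }
  assert (D : forall s1 s2 s1' s2' x, sign_class B s1 s2 x -> sign_class B s1' s2' x ->
    s1 <> s1' \/ s2 <> s2' -> False).
  { intros s1 s2 s1' s2' x H H' Ne. destruct (sign_class_unique _ _ _ _ _ _ H H'). tauto. }
  apply (card_ext (fun x => zero_locus B x \/ (sign_class B true true x \/
    (sign_class B true false x \/ (sign_class B false true x \/ sign_class B false false x))))).
  - intros [[[x0 x1] x2] x3]. split.
    + intros [[H _]|[[H _]|[[H _]|[[H _]|[H _]]]]]; exact H.
    + intros Hx. assert (x1 <> 0) by (apply SU_iff in Hx; tauto).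
      destruct (Z.eq_dec x0 0) as [E|E]; [left; split; auto|right].
      unfold sign_class; cbn [sign_flip sg].
      destruct (Z_lt_le_dec 0 x1), (Z_lt_le_dec 0 x0);
        [left|right; left|right; right; left|right; right; right];
        (split; [exact Hx | split; lia]).
  - repeat apply card_union; auto using sign_class_card.
    all: intros x H H'; repeat match type of H' with _ \/ _ => destruct H' as [H'|H'] end;
      first [ exact (Dz _ _ x H H')
            | apply (D _ _ _ _ x H H'); first [left; discriminate | right; discriminate]].
Qed.

(** * The locus x0 = 0 *)

Lemma cube_inj a b : a^3 = b^3 -> a = b.
Proof.
  intros H. assert (E : (a - b) * (a*a + a*b + b*b) = 0) by nia.
  apply Z.mul_eq_0 in E as [E|E]; nia.
Qed.

Lemma exists_cube_root x : x <> 0 ->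
  (forall p, is_prime p -> exists k, vp p x = (3 * k)%nat) -> exists c, x = c^3.
Proof.
  intros Hx H.
  destruct (exists_vp x (fun p => vp p x / 3)%nat Hx) as [c [Hc Hv]].
  { intros p Hp Hpos. apply prime_divide_iff_vp_pos; auto.
    destruct (H p Hp) as [k Hk]. rewrite Hk, Nat.mul_comm, Nat.div_mul in Hpos by lia. lia. }
  assert (E : Z.abs x = c^3).
  { apply eq_of_vp; [lia|positivity|]. intros p Hp.
    rewrite vp_abs, vp_pow, Hv by (auto; lia). destruct (H p Hp) as [k Hk].
    rewrite Hk, Nat.mul_comm, Nat.div_mul by lia. cbn. lia. }
  destruct (Z.abs_spec x) as [[_ A]|[_ A]]; [exists c | exists (-c)]; lia.
Qed.

(* With [x0 = 0] the equation reads [x2^3 = - x1^2 x3]; as the three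
   coordinates have no common prime, [x1] and [x3] are coprime cubes. *)
Lemma zero_solution_cubes x1 x2 x3 : x1 <> 0 -> primitive_solution 0 x1 x2 x3 ->
  exists s t, x1 = s^3 /\ x3 = t^3.
Proof.
  intros H1 [E G].
  assert (E2 : x2^3 = - (x1^2 * x3)) by (apply (Z.mul_reg_l _ _ x1); auto; nia).
  destruct (Z.eq_dec x2 0) as [->|H2].
  { assert (x3 = 0) as ->.
    { assert (x1^2 * x3 = 0) as Z3 by (cbn in E2; lia).
      apply Z.mul_eq_0 in Z3 as [Z3|Z3]; auto. apply (Z.pow_nonzero x1 2) in H1; lia. }
    rewrite !Z.gcd_0_r in G. exists (Z.sgn x1), 0.
    destruct (Z.abs_spec x1) as [[_ A]|[_ A]];
      [rewrite Z.sgn_pos by lia|rewrite Z.sgn_neg by lia]; cbn; lia. }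
  assert (H3 : x3 <> 0) by (intros ->; rewrite Z.mul_0_r, Z.opp_0 in E2;
    apply (Z.pow_nonzero x2 3) in H2; lia).
  assert (V : forall p, is_prime p -> (3 * vp p x2 = 2 * vp p x1 + vp p x3)%nat).
  { intros p Hp. assert (vp p (x2^3) = vp p (- (x1^2 * x3))) as Ev by now rewrite E2.
    rewrite vp_opp, vp_mul, !vp_pow in Ev by (try apply Z.pow_nonzero; lia). cbn in Ev. lia. }
  assert (M : forall p, is_prime p -> vp p x1 = 0%nat \/ vp p x2 = 0%nat \/ vp p x3 = 0%nat).
  { intros p Hp. destruct (Nat.eq_dec (vp p x1) 0); auto.
    destruct (Nat.eq_dec (vp p x2) 0); auto. destruct (Nat.eq_dec (vp p x3) 0); auto.
    exfalso. apply (proj1 (gcd_eq1_iff_primes _ _) G p Hp).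
    - apply Z.gcd_greatest; apply prime_divide_iff_vp_pos; auto; lia.
    - apply prime_divide_iff_vp_pos; auto; lia. }
  destruct (exists_cube_root x1 H1) as [s Hs].
  { intros p Hp. specialize (V p Hp).
    destruct (M p Hp) as [A|[A|A]]; [exists 0%nat|exists 0%nat|exists (vp p x1 - vp p x2)%nat]; lia. }
  destruct (exists_cube_root x3 H3) as [t Ht].
  { intros p Hp. specialize (V p Hp).
    destruct (M p Hp) as [A|[A|A]]; [exists (vp p x2)|exists 0%nat|exists 0%nat]; lia. }
  exists s, t. auto.
Qed.

Definition zrange (K : Z) : list Z := map (fun n => Z.of_nat n - K) (seq 0 (Z.to_nat (2*K + 1))).

Lemma in_zrange K x : Z.abs x <= K -> In x (zrange K).
Proof.
  intros H. apply in_map_iff. exists (Z.to_nat (x + K)). split.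
  - rewrite Z2Nat.id by lia. ring.
  - apply in_seq. lia.
Qed.

Lemma length_zrange K : length (zrange K) = Z.to_nat (2*K + 1).
Proof. unfold zrange. now rewrite length_map, length_seq. Qed.

Lemma SU_bounded B : (0 <= B)%R -> exists L, forall x, SU B x -> In x L.
Proof.
  intros HB. set (N := up B). destruct (archimed B) as [HN _]. fold N in HN.
  exists (list_prod (list_prod (list_prod (zrange (N * N)) (zrange N)) (zrange N)) (zrange N)).
  intros [[[x0 x1] x2] x3] (_ & _ & _ & B1 & B2 & B3 & B0).
  assert (Le : forall y b, (IZR (Z.abs y) <= b)%R -> (b < IZR N * IZR N)%R -> Z.abs y <= N * N).
  { intros y b Hy Hb. apply Z.lt_le_incl, lt_IZR. rewrite mult_IZR. lra. }
  repeat apply in_prod; apply in_zrange.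
  - apply (Le x0 (B ^ 2)%R); [exact B0 | cbn; nra].
  - all: apply Z.lt_le_incl, lt_IZR; lra.
Qed.

Open Scope R_scope.

Lemma Rpower_third B : 1 <= B ->
  1 <= Rpower B (1/3) /\ Rpower B (1/3) ^ 3 = B /\ Rpower B (1/3) ^ 2 = Rpower B (2/3).
Proof.
  intros HB. rewrite <- !Rpower_pow by apply exp_pos. rewrite !Rpower_mult. split; [|split].
  - rewrite <- (Rpower_O B) at 1 by lra. apply Rle_Rpower; lra.
  - replace (1/3 * INR 3) with 1 by (cbn; field). apply Rpower_1. lra.
  - f_equal. cbn. field.
Qed.

Lemma cube_lt a b : 0 <= a < b -> a ^ 3 < b ^ 3.
Proof.
  intros H. replace (b^3) with (a^3 + (b - a) * (a*a + a*b + b*b)) by ring.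
  assert (0 < (b - a) * (a*a + a*b + b*b)) by (apply Rmult_lt_0_compat; nra). lra.
Qed.

(* A point of the zero locus is determined by the cube roots of [x1] and [x3],
   each of size at most [B^(1/3)]. *)
Lemma zero_locus_card_le B n0 : 1 <= B -> is_card (zero_locus B) n0 ->
  INR n0 <= 9 * Rpower B (2/3).
Proof.
  intros HB H0. destruct (Rpower_third B HB) as (R1 & R3 & R2).
  set (r := Rpower B (1/3)) in *. set (K := (up r - 1)%Z).
  destruct (archimed r) as [A1 A2].
  assert (HK : IZR K <= r) by (unfold K; rewrite minus_IZR; lra).
  assert (HK1 : (1 <= K)%Z) by (unfold K; enough (1 < up r)%Z by lia; apply lt_IZR; lra).
  assert (Root : forall s, IZR (Z.abs (s^3)) <= B -> (Z.abs s <= K)%Z).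
  { intros s Hs. assert (IZR (Z.abs s) <= r).
    { apply Rnot_lt_le. intros Lt.
      assert (r ^ 3 < IZR (Z.abs s) ^ 3) as C by (apply cube_lt; lra).
      rewrite pow_IZR in C. rewrite Z.abs_pow in Hs. change (Z.of_nat 3) with 3%Z in C. lra. }
    enough (Z.abs s < up r)%Z by (unfold K; lia). apply lt_IZR. lra. }
  assert (Le : (n0 <= length (map (fun st => (fst st ^ 3, snd st ^ 3)%Z)
                                  (list_prod (zrange K) (zrange K))))%nat).
  { apply (card_le_inj (zero_locus B) (fun x => let '(_, x1, _, x3) := x in (x1, x3)));
      auto.
    - intros [[[x0 x1] x2] x3] [[[y0 y1] y2] y3] [Hx X0] [Hy Y0] E.
      injection E as <- <-. subst x0 y0.
      apply SU_iff in Hx as ((Ex & _) & H1 & _), Hy as ((Ey & _) & _).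
      assert (x2 = y2) as <-; [|reflexivity].
      apply cube_inj, (Z.mul_reg_l _ _ x1); auto. lia.
    - intros [[[x0 x1] x2] x3] [Hx X0]. subst x0.
      apply SU_iff in Hx as (S & H1 & B1 & _ & B3 & _).
      destruct (zero_solution_cubes x1 x2 x3 H1 S) as (s & t & -> & ->).
      apply in_map_iff. exists (s, t). split; auto.
      apply in_prod; apply in_zrange, Root; auto. }
  rewrite length_map, length_prod, length_zrange in Le.
  apply le_INR in Le. rewrite mult_INR in Le.
  replace (INR (Z.to_nat (2 * K + 1))) with (2 * IZR K + 1) in Le
    by (rewrite INR_IZR_INZ, Z2Nat.id, plus_IZR, mult_IZR by lia; reflexivity).
  rewrite <- R2. assert (1 <= IZR K) by (apply IZR_le; lia). cbn. nra.
Qed.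

Theorem lemma9p2 :
  exists C B0 : R, 0 < C /\ 1 <= B0 /\
    forall B : R, B0 <= B ->
      exists nU nN : nat,
        is_card (SU B) nU /\ is_card (SN B) nN /\
        Rabs (INR nU / 2 - 2 * INR nN) <= C * Rpower B (2 / 3).
Proof.
  exists 5, 1. split; [lra|split; [lra|]]. intros B HB.
  destruct (SU_bounded B) as [L HL]; [lra|].
  destruct (card_exists (zero_locus B) L) as [n0 H0]; [intros x [Hx _]; auto|].
  destruct (card_exists_inj (SN B) torsor_map L) as [nN HN].
  { intros t t' Ht Ht'. apply SN_iff in Ht as [Ht _], Ht' as [Ht' _]. now apply torsor_map_inj. }
  { intros t Ht. apply HL. destruct (torsor_map t) as [[[x0 x1] x2] x3] eqn:M.
    apply SU_positive_iff. eauto. }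
  exists (n0 + (nN + (nN + (nN + nN))))%nat, nN.
  split; [apply SU_card; auto|]. split; [exact HN|].
  pose proof (zero_locus_card_le B n0 HB H0). pose proof (pos_INR n0).
  rewrite !plus_INR, Rabs_right; lra.
Qed.
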